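(* In the toy model (see context), let $S=\sum_{i=0}^{L-1}[\![\Delta\alpha_i]\!]$, $\omega_i=\Delta\alpha_i-[\![\Delta\alpha_i]\!]$, let $\sigma$ be the permutation of $\{0,\dots,L-1\}$ with $\omega_{\sigma(0)}<\omega_{\sigma(1)}<\dots<\omega_{\sigma(L-1)}$, and let $k^+$ be as defined in the context. Then the maximum $z^+_{\max}=\max_i z^+_i$ of the rescaled well coordinates of the threshold configuration is $$z^+_{\max}=\begin{cases}\omega_{\sigma(S)}+1 & S\ge0,\ k^+\ne\sigma(S),\\ \omega_{\sigma(S-1)}+1 & S>0,\ k^+=\sigma(S),\\ \omega_{\sigma(L-1)} & S=0,\ k^+=\sigma(0),\\ \omega_{\sigma(L-|S|)} & S<0,\ k^+\ne\sigma(L-|S|),\\ \omega_{\sigma(L-|S|-1)} & S<0,\ k^+=\sigma(L-|S|),\end{cases}$$ and the threshold force is $F_{\mathrm{th}}=\lambda\left(\tfrac12-\eta z^+_{\max}\right)$.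
   Context: Toy model: $L$ sites with periodic boundary conditions (indices mod $L$); disorder $\alpha_0,\dots,\alpha_{L-1}$ i.i.d. uniform on $(-\tfrac12,\tfrac12)$, extended periodically; $\lambda>0$ and $\eta=\frac{2}{2+\lambda+\sqrt{\lambda^2+4\lambda}}$; $\Delta x_i=x_{i-1}-2x_i+x_{i+1}$ (periodic); $[\![x]\!]$ is the integer nearest to $x$. A configuration $\vec m\in\mathbb Z^L$ has well coordinates at force $0$ given by $\tilde y_i=\eta z_i$ with rescaled well coordinates $z_i=\Delta m_i+\Delta\alpha_i$. The threshold configuration $\vec m^+$ (a.s. unique up to adding a common integer) attains $\min_{\vec m}\max_i z_i$; $z^+_i$ are its rescaled well coordinates. The threshold force is $F_{\mathrm{th}}=\lambda(\tfrac12-\min_{\vec m}\max_i\tilde y_i)$. The index $k^+$: define $\vec J$ by $J_i=1$ for the $S+1$ indices with smallest $\omega_i$ (others $0$) if $S\ge0$, and $J_i=-1$ for the $|S|-1$ indices with largest $\omega_i$ (others $0$) if $S<0$; then $k^+\in\{0,\dots,L-1\}$, $k^+\equiv\sum_{i=0}^{L-1}i(-[\![\Delta\alpha_i]\!]+J_i)\pmod L$. *)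

From HB Require Import structures.
From mathcomp Require Import all_boot all_order all_algebra.
From mathcomp Require Import classical_sets reals.
Set Implicit Arguments. Unset Strict Implicit. Unset Printing Implicit Defensive.
Import Order.TTheory GRing.Theory Num.Theory.
Local Open Scope ring_scope.
Local Open Scope classical_set_scope.

(* Sites are 0..L-1; a configuration / disorder is a function on nat, used
   only through indices taken mod L (periodic boundary conditions). *)

Definition lap (V : zmodType) (L : nat) (x : nat -> V) (i : nat) : V :=
  x ((i + L - 1) %% L)%N - x (i %% L)%N *+ 2 + x (i.+1 %% L)%N.

(* nearest integer [[x]] (ties, a null set here, rounded up) *)
Definition nint (R : realType) (x : R) : int := Num.floor (x + 2^-1).

(* maximum over the sites 0..L-1 (meaningful for L > 0) *)
Definition maxL (R : realType) (L : nat) (f : nat -> R) : R :=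
  \big[Num.max/f 0%N]_(i < L) f i.

Definition eta_lam (R : realType) (lambda : R) : R :=
  2 / (2 + lambda + Num.sqrt (lambda ^+ 2 + 4 * lambda)).

Definition zc (R : realType) (L : nat) (alpha : nat -> R) (m : nat -> int)
  (i : nat) : R := (lap L m i)%:~R + lap L alpha i.

(* well coordinates at force 0: y~_i = eta z_i *)
Definition ytilde (R : realType) (L : nat) (lambda : R) (alpha : nat -> R)
  (m : nat -> int) (i : nat) : R := eta_lam lambda * zc L alpha m i.

Definition is_threshold_config (R : realType) (L : nat) (alpha : nat -> R)
  (m : nat -> int) : Prop :=
  forall m' : nat -> int, maxL L (zc L alpha m) <= maxL L (zc L alpha m').

Definition Fth (R : realType) (L : nat) (lambda : R) (alpha : nat -> R) : R :=
  lambda * (2^-1 - inf [set maxL L (ytilde L lambda alpha m) | m in setT]).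

Definition Ssum (R : realType) (L : nat) (alpha : nat -> R) : int :=
  \sum_(i < L) nint (lap L alpha i).

Definition omega (R : realType) (L : nat) (alpha : nat -> R) (i : nat) : R :=
  lap L alpha i - (nint (lap L alpha i))%:~R.

(* J_i : if S >= 0, J_i = 1 for the S+1 indices with smallest ω (i.e. at most S
   indices have smaller ω); if S < 0, J_i = -1 for the |S|-1 indices with
   largest ω (fewer than |S|-1 indices have larger ω); 0 otherwise.
   (ω is injective on the sites, so these are exactly the prescribed sets.) *)
Definition Jv (R : realType) (L : nat) (alpha : nat -> R) (i : nat) : int :=
  let S := Ssum L alpha in
  let w := omega L alpha in
  if (0 <= S)%R then
    (if leq (count (fun j => (w j < w i)%R) (iota 0 L)) `|S| then 1 else 0)
  else
    (if leq (count (fun j => (w i < w j)%R) (iota 0 L)).+1 `|S|.-1 then -1 else 0).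

Definition kplus (R : realType) (L : nat) (alpha : nat -> R) : int :=
  ((\sum_(i < L) (i%:Z) * (- nint (lap L alpha i) + Jv L alpha i)) %% (L%:Z))%Z.

From HB Require Import structures.
From mathcomp Require Import all_boot all_order all_algebra.
From mathcomp Require Import classical_sets reals.
From mathcomp Require Import zify ring lra.
Set Implicit Arguments. Unset Strict Implicit. Unset Printing Implicit Defensive.
Import Order.TTheory GRing.Theory Num.Theory.
Local Open Scope ring_scope.

(* Write Δα_i = [[Δα_i]] + ω_i with |ω_i| < 1/2. The rescaled coordinates of a
   configuration m are z_i = p_i + ω_i with p = Δm + [[Δα]] integer, and the
   integer vectors p obtained this way are exactly those with sum S and with
   sum_i i (p_i - [[Δα_i]]) divisible by L (the image of the periodic
   Laplacian). As ω is sorted by σ, max_i z_i <= ω_σ(s) + c means p_σ(t) <= c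
   for t <= s and p_σ(t) <= c - 1 for t > s. The vector J - e_k+ is admissible
   and reaches the claimed level at σ(s); an admissible vector strictly below
   that level would either have sum smaller than S or be J - e_j for some
   j <> k+, contradicting the congruence that defines k+. *)

Section PeriodicLaplacian.
Variable L : nat.

Lemma lap_ord (V : zmodType) (x : nat -> V) (i : 'I_L) :
  lap L x i = x (ord_pred i) - x i *+ 2 + x (ordS i).
Proof. by rewrite /lap /= (modn_small (ltn_ord i)) subn1. Qed.

Lemma sum_lap (V : zmodType) (x : nat -> V) : \sum_(i < L) lap L x i = 0.
Proof.
have sum_pred : \sum_(i < L) x (ord_pred i) = \sum_(i < L) x i.
  by rewrite [RHS](reindex_inj (@ord_pred_inj L)).
have sum_succ : \sum_(i < L) x (ordS i) = \sum_(i < L) x i.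
  by rewrite [RHS](reindex_inj (@ordS_inj L)).
under eq_bigr do rewrite lap_ord.
rewrite !big_split sum_pred sum_succ sumrN sumrMnl /=.
by rewrite mulr2n opprD addrA subrr sub0r addNr.
Qed.

Hypothesis L_gt0 : (0 < L)%N.

(* Summation by parts: sum_i i (Δm)_i = sum_j m_j (succ j + pred j - 2 j),
   and succ j + pred j - 2 j (indices mod L) is 0 or ±L. *)
Lemma dvdz_sum_mul_lap (m : nat -> int) :
  (L%:Z %| \sum_(i < L) i%:Z * lap L m i)%Z.
Proof.
have shift_ord (j : 'I_L) :
    (L%:Z %| (ordS j : nat)%:Z + (ord_pred j : nat)%:Z - 2 * j%:Z)%Z.
  apply/dvdzP; exists (1 - (j.+1 %/ L)%:Z - ((j + L).-1 %/ L)%:Z) => /=.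
  have := divn_eq j.+1 L; have := divn_eq (j + L).-1 L; have := ltn_ord j; nia.
have sum_pred : \sum_(i < L) i%:Z * m (ord_pred i) = \sum_(j < L) (ordS j : nat)%:Z * m j.
  by rewrite (reindex_inj (@ordS_inj L)); apply: eq_bigr => j _; rewrite ordSK.
have sum_succ : \sum_(i < L) i%:Z * m (ordS i) = \sum_(j < L) (ord_pred j : nat)%:Z * m j.
  by rewrite (reindex_inj (@ord_pred_inj L)); apply: eq_bigr => j _; rewrite ord_predK.
have -> : \sum_(i < L) i%:Z * lap L m i = \sum_(i < L) i%:Z * m (ord_pred i) +
    \sum_(i < L) i%:Z * m (ordS i) - \sum_(i < L) 2 * i%:Z * m i.
  by rewrite -big_split -sumrB; apply: eq_bigr => i _ /=; rewrite lap_ord mulr2n; ring.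
rewrite sum_pred sum_succ -big_split -sumrB; apply: rpred_sum => j _ /=.
rewrite -mulrDl -mulrBl; exact/dvdz_mulr/shift_ord.
Qed.

Lemma sum_partial_sums (n : nat -> int) N :
  \sum_(t < N) \sum_(j < t.+1) n j = \sum_(j < N) (N%:Z - j%:Z) * n j.
Proof.
elim: N => [|N IH]; first by rewrite !big_ord0.
rewrite big_ord_recr IH /= [\sum_(j < N.+1) n j]big_ord_recr [RHS]big_ord_recr /=.
have -> : \sum_(j < N) (N.+1%:Z - j%:Z) * n j = \sum_(j < N) ((N%:Z - j%:Z) * n j + n j).
  by apply: eq_bigr => j _; rewrite -addn1 PoszD; ring.
rewrite big_split /= -addn1 PoszD; ring.
Qed.

(* m is a double primitive of n; the constant c makes it L-periodic. *)
Lemma lap_surj (n : nat -> int) :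
  \sum_(i < L) n i = 0 -> (L%:Z %| \sum_(i < L) i%:Z * n i)%Z ->
  exists m : nat -> int, forall i, (i < L)%N -> lap L m i = n i.
Proof.
move=> sum_n0 /divzK; set c := (_ %/ _)%Z => sum_in.
pose d t := c + \sum_(j < t.+1) n j.
pose m i := \sum_(t < i) d t.
have mS i : m i.+1 = m i + d i by rewrite /m big_ord_recr.
have m0 : m 0%N = 0 by rewrite /m big_ord0.
have mL : m L = 0.
  rewrite /m /d big_split /= sum_partial_sums sumr_const card_ord.
  under eq_bigr do rewrite mulrBl.
  by rewrite sumrB -mulr_sumr sum_n0 mulr0 sub0r -sum_in -mulrzz pmulrn subrr.
have m_mod j : (j <= L)%N -> m (j %% L)%N = m j.
  rewrite leq_eqVlt => /predU1P[->|/modn_small-> //].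
  by rewrite modnn m0 mL.
have dL : d L.-1 = c by rewrite /d prednK // sum_n0 addr0.
exists m => -[|i] hi; rewrite /lap.
- rewrite add0n subn1 (modn_small (_ : L.-1 < L)%N) ?prednK // mod0n m0.
  have := mS L.-1; rewrite prednK // mL dL (m_mod 1%N) // mS m0 /d big_ord1 => h.
  by rewrite (_ : m L.-1 = - c); [ring | apply/eqP; rewrite -addr_eq0 -h].
- rewrite (_ : (i.+1 + L - 1 = i + L)%N); last by lia.
  rewrite modnDr (modn_small (ltnW hi)) (modn_small hi) m_mod // !mS /d.
  rewrite [\sum_(j < i.+2) n j]big_ord_recr /= mulr2n; ring.
Qed.

Lemma lap_imageP (n : nat -> int) :
  (exists m : nat -> int, forall i, (i < L)%N -> lap L m i = n i) <->
  \sum_(i < L) n i = 0 /\ (L%:Z %| \sum_(i < L) i%:Z * n i)%Z.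
Proof.
split=> [[m lapE] | [? ?]]; last exact: lap_surj.
have {}lapE (i : 'I_L) : n i = lap L m i by rewrite lapE.
under eq_bigr do rewrite lapE; under [X in (_ %| X)%Z]eq_bigr do rewrite lapE.
by rewrite sum_lap dvdz_sum_mul_lap.
Qed.

End PeriodicLaplacian.

Section MaxL.
Variables (R : realType) (L : nat).
Implicit Types (f : nat -> R).

Lemma le_maxL f i : (i < L)%N -> f i <= maxL L f.
Proof. by move=> ltiL; exact: (le_bigmax _ (fun j : 'I_L => f j) (Ordinal ltiL)). Qed.

Lemma maxL_le f x : (0 < L)%N -> (forall i, (i < L)%N -> f i <= x) -> maxL L f <= x.
Proof. by move=> L_gt0 f_le; apply: bigmax_le => [|i _]; apply: f_le. Qed.

Lemma maxL_scale f e : 0 <= e -> maxL L (fun i => e * f i) = e * maxL L f.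
Proof.
move=> e_ge0; rewrite /maxL.
by rewrite (big_morph _ (fun y z => @maxr_pMr _ e y z e_ge0) (erefl _)).
Qed.

End MaxL.

Lemma inf_attained (R : realType) (E : set R) x : E x -> lbound E x -> inf E = x.
Proof.
move=> Ex lbx; apply/le_anti; rewrite lb_le_inf ?andbT //; last by exists x.
exact: (ge_inf (ex_intro _ x lbx)).
Qed.

Lemma eta_lam_gt0 (R : realType) (lambda : R) : 0 < lambda -> 0 < eta_lam lambda.
Proof.
move=> lambda_gt0; rewrite /eta_lam divr_gt0 //.
have := sqrtr_ge0 (lambda ^+ 2 + 4 * lambda); lra.
Qed.

Section Threshold.
Variables (R : realType) (L : nat) (alpha : nat -> R).

Definition minmax_z (T : R) : Prop :=
  (exists m, maxL L (zc L alpha m) = T) /\ forall m, T <= maxL L (zc L alpha m).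

Lemma minmax_z_threshold T : minmax_z T -> exists m, is_threshold_config L alpha m.
Proof. by case=> -[m0 <-] ge_T; exists m0. Qed.

Lemma threshold_maxL m T :
  is_threshold_config L alpha m -> minmax_z T -> maxL L (zc L alpha m) = T.
Proof. by move=> thr_m [[m0 <-] ge_T]; apply/le_anti; rewrite thr_m ge_T. Qed.

Lemma Fth_threshold lambda m : (0 < L)%N -> 0 < lambda ->
  is_threshold_config L alpha m ->
  Fth L lambda alpha = lambda * (2^-1 - eta_lam lambda * maxL L (zc L alpha m)).
Proof.
move=> L_gt0 lambda_gt0 thr_m; rewrite /Fth.
have eta_ge0 := ltW (eta_lam_gt0 lambda_gt0).
have maxL_ytilde m' : maxL L (ytilde L lambda alpha m') =
    eta_lam lambda * maxL L (zc L alpha m') by rewrite -maxL_scale.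
rewrite (@inf_attained _ _ (eta_lam lambda * maxL L (zc L alpha m))) //.
  by exists m => //; rewrite maxL_ytilde.
by move=> _ [m' _ <-]; rewrite maxL_ytilde ler_wpM2l.
Qed.

End Threshold.

Lemma count_lt_iota L t : (t <= L)%N -> count (fun u => (u < t)%N) (iota 0 L) = t.
Proof.
move=> le_tL; rewrite -(subnKC le_tL) iotaD count_cat add0n.
rewrite (eq_in_count (a2 := predT)) => [|u]; last by rewrite mem_iota.
rewrite count_predT size_iota (eq_in_count (a2 := pred0)) ?count_pred0 ?addn0 //.
by move=> u; rewrite mem_iota /= => /andP[+ _]; rewrite leqNgt => /negbTE.
Qed.

Lemma count_gt_iota L t : (t < L)%N -> count (fun u => (t < u)%N) (iota 0 L) = (L - t.+1)%N.
Proof.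
move=> lt_tL; have := count_predC (fun u => (u < t.+1)%N) (iota 0 L).
rewrite count_lt_iota // size_iota.
rewrite (@eq_count _ _ (predC (fun u => (u < t.+1)%N))) => [|u]; first lia.
by rewrite /= ltnNge.
Qed.

Lemma sum_ord_eq (V : nmodType) n j (F : nat -> V) : (j < n)%N ->
  \sum_(i < n) (if (i : nat) == j then F i else 0) = F j.
Proof.
by move=> ltj; rewrite -big_mkcond (big_pred1 (Ordinal ltj)).
Qed.

Section Sorting.
Variables (L : nat) (sigma : nat -> nat).
Hypothesis sigma_lt : forall i, (i < L)%N -> (sigma i < L)%N.
Hypothesis sigma_inj : forall i j, (i < L)%N -> (j < L)%N -> sigma i = sigma j -> i = j.

Lemma perm_sigma : perm_eq (map sigma (iota 0 L)) (iota 0 L).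
Proof.
have uniq_sigma : uniq (map sigma (iota 0 L)).
  rewrite map_inj_in_uniq ?iota_uniq // => x y.
  by rewrite !mem_iota !add0n => /andP[_ ltx] /andP[_ lty]; apply: sigma_inj.
have sub : {subset map sigma (iota 0 L) <= iota 0 L}.
  move=> x /mapP[y]; rewrite !mem_iota !add0n => /andP[_ lt_yL] ->.
  exact: sigma_lt.
have [_ eq_mem] := uniq_min_size uniq_sigma sub (eq_leq (esym (size_map _ _))).
exact: uniq_perm uniq_sigma (iota_uniq 0 L) eq_mem.
Qed.

Lemma sum_sigma (V : nmodType) (F : nat -> V) :
  \sum_(i < L) F i = \sum_(t < L) F (sigma t).
Proof.
rewrite -(big_mkord xpredT F) -(big_mkord xpredT (F \o sigma)).
by rewrite /index_iota subn0 -(perm_big _ perm_sigma) big_map.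
Qed.

Lemma sigma_surj i : (i < L)%N -> exists2 t, (t < L)%N & sigma t = i.
Proof.
move=> ltiL; have : i \in map sigma (iota 0 L) by rewrite (perm_mem perm_sigma) mem_iota.
by case/mapP => t; rewrite mem_iota add0n => /andP[_ lttL] ->; exists t.
Qed.

Lemma sigma_eq t u : (t < L)%N -> (u < L)%N -> (sigma t == sigma u) = (t == u).
Proof. by move=> ltt ltu; apply/eqP/eqP => [/sigma_inj ->|->]. Qed.

End Sorting.

Section IntegerLevels.
Variable R : realFieldType.

Lemma int_le_addr (q c : int) (d : R) : -1 < d < 1 ->
  (q%:~R <= c%:~R + d) = (q <= if d < 0 then c - 1 else c).
Proof.
move=> /andP[d_gtN1 d_lt1]; case: (ltP d 0) => d0; apply/idP/idP => h.
- have : q%:~R < c%:~R :> R by lra.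
  by rewrite ltr_int; lia.
- have : q%:~R <= (c - 1)%:~R :> R by rewrite ler_int.
  by rewrite intrB; lra.
- have : q%:~R < (c + 1)%:~R :> R by rewrite intrD; lra.
  by rewrite ltr_int; lia.
- have : q%:~R <= c%:~R :> R by rewrite ler_int.
  by lra.
Qed.

Lemma int_lt_addr (q c : int) (d : R) : -1 < d < 1 ->
  (q%:~R < c%:~R + d) = (q <= if d <= 0 then c - 1 else c).
Proof.
move=> /andP[d_gtN1 d_lt1]; case: (leP d 0) => d0; apply/idP/idP => h.
- have : q%:~R < c%:~R :> R by lra.
  by rewrite ltr_int; lia.
- have : q%:~R <= (c - 1)%:~R :> R by rewrite ler_int.
  by rewrite intrB; lra.
- have : q%:~R < (c + 1)%:~R :> R by rewrite intrD; lra.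
  by rewrite ltr_int; lia.
- have : q%:~R <= c%:~R :> R by rewrite ler_int.
  by lra.
Qed.

End IntegerLevels.

Definition step_down (s : nat) (c : int) (t : nat) : int :=
  if (s <= t)%N then c - 1 else c.

Lemma sum_step_down L s c :
  \sum_(t < L) step_down s c t = c * L%:Z - (L - s)%:Z.
Proof.
elim: L => [|L IH]; first by rewrite big_ord0 sub0n mulr0 subr0.
rewrite big_ord_recr /= IH /step_down -addn1 !PoszD.
case: (leqP s L) => le_sL.
  rewrite (_ : (L + 1 - s)%N = (L - s).+1); last by lia.
  rewrite -addn1 PoszD; ring.
rewrite (_ : (L + 1 - s)%N = 0%N); last by lia.
rewrite (_ : (L - s)%N = 0%N); last by lia.
ring.
Qed.

Lemma eq_from_le_sum (R : numDomainType) n (F G : 'I_n -> R) :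
  (forall i, F i <= G i) -> \sum_i F i = \sum_i G i -> forall i, F i = G i.
Proof.
move=> leFG eq_sum i; apply/eqP; rewrite eq_sym -subr_eq0; apply/eqP.
apply: (@psumr_eq0P _ _ xpredT (fun j => G j - F j)) => // [j _|].
  by rewrite subr_ge0.
by rewrite sumrB eq_sum subrr.
Qed.

Section ToyModel.
Variables (R : realType) (L : nat) (alpha : nat -> R) (sigma : nat -> nat).
Hypothesis L_gt0 : (0 < L)%N.
Hypothesis not_half : forall i (n : int), (i < L)%N -> lap L alpha i <> n%:~R + 2^-1.
Hypothesis sigma_lt : forall i, (i < L)%N -> (sigma i < L)%N.
Hypothesis sigma_inj : forall i j, (i < L)%N -> (j < L)%N -> sigma i = sigma j -> i = j.
Hypothesis sigma_sorts : forall i j, (i < j < L)%N ->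
  omega L alpha (sigma i) < omega L alpha (sigma j).

Local Notation a i := (nint (lap L alpha i)).
Local Notation w := (omega L alpha).
Local Notation S := (Ssum L alpha).

Lemma omega_bound i : (i < L)%N -> - 2^-1 < w i < 2^-1.
Proof.
move=> ltiL; rewrite /omega /nint.
set x := lap L alpha i; have /andP[] := floor_itv (x + 2^-1).
set f := Num.floor _; rewrite intrD => f_le f_gt.
have : x - f%:~R != - 2^-1.
  by apply/eqP => e; apply: (@not_half i (f - 1) ltiL); rewrite -/x intrB; lra.
by rewrite lt_neqAle eq_sym => ->; lra.
Qed.

Lemma lap_alpha_split i : lap L alpha i = (a i)%:~R + w i.
Proof. by rewrite /omega addrC subrK. Qed.

Lemma sum_omega : \sum_(i < L) w i = - S%:~R.
Proof.
have := sum_lap L alpha; rewrite /Ssum rmorph_sum.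
under eq_bigr do rewrite lap_alpha_split.
by rewrite big_split /= addrC => /eqP; rewrite addr_eq0 => /eqP.
Qed.

Lemma Ssum_bound : (2 * `|S| < L)%N.
Proof.
have half_sum : \sum_(i < L) (2^-1 : R) = L%:R / 2.
  by rewrite sumr_const card_ord mulr_natl.
have : `|S%:~R| < L%:R / 2 :> R.
  rewrite -normrN -sum_omega -half_sum (le_lt_trans (ler_norm_sum _ _ _)) //.
  apply: ltr_sum => [|i _].
    by apply/hasP; exists (Ordinal L_gt0); rewrite ?mem_index_enum.
  by have /andP[? ?] := omega_bound (ltn_ord i); rewrite ltr_norml; apply/andP; split.
rewrite -intr_norm -natr_absz ltr_pdivlMr // -natrM ltr_nat; lia.
Qed.

Lemma lt_omega_sigma t u : (t < L)%N -> (u < L)%N ->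
  (w (sigma t) < w (sigma u)) = (t < u)%N.
Proof.
move=> ltt ltu; case: (ltngtP t u) => [lttu|ltut|->]; last by rewrite ltxx.
- by apply: sigma_sorts; rewrite lttu ltu.
- by apply/negbTE; rewrite -leNgt ltW // sigma_sorts // ltut ltt.
Qed.

Lemma le_omega_sigma t u : (t < L)%N -> (u < L)%N ->
  (w (sigma t) <= w (sigma u)) = (t <= u)%N.
Proof. by move=> ltt ltu; rewrite leNgt lt_omega_sigma // -leqNgt. Qed.

Lemma count_omega_lt t : (t < L)%N ->
  count (fun j => w j < w (sigma t)) (iota 0 L) = t.
Proof.
move=> ltt; rewrite -(permP (perm_sigma sigma_lt sigma_inj)) count_map.
rewrite -[RHS](count_lt_iota (ltnW ltt)); apply: eq_in_count => u.
by rewrite mem_iota => /andP[_ ltu] /=; rewrite lt_omega_sigma.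
Qed.

Lemma count_omega_gt t : (t < L)%N ->
  count (fun j => w (sigma t) < w j) (iota 0 L) = (L - t.+1)%N.
Proof.
move=> ltt; rewrite -(permP (perm_sigma sigma_lt sigma_inj)) count_map.
rewrite -[RHS](count_gt_iota ltt); apply: eq_in_count => u.
by rewrite mem_iota => /andP[_ ltu] /=; rewrite lt_omega_sigma.
Qed.

Lemma z_le_level (q c : int) s t : (s < L)%N -> (t < L)%N ->
  (q%:~R + w (sigma t) <= w (sigma s) + c%:~R) = (q <= step_down s.+1 c t).
Proof.
move=> lts ltt; have /andP[? ?] := omega_bound (sigma_lt lts).
have /andP[? ?] := omega_bound (sigma_lt ltt).
rewrite (_ : (_ <= _) = (q%:~R <= c%:~R + (w (sigma s) - w (sigma t)))).
  by rewrite int_le_addr ?subr_lt0 ?lt_omega_sigma //; lra.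
by apply/idP/idP => ?; lra.
Qed.

Lemma z_lt_level (q c : int) s t : (s < L)%N -> (t < L)%N ->
  (q%:~R + w (sigma t) < w (sigma s) + c%:~R) = (q <= step_down s c t).
Proof.
move=> lts ltt; have /andP[? ?] := omega_bound (sigma_lt lts).
have /andP[? ?] := omega_bound (sigma_lt ltt).
rewrite (_ : (_ < _) = (q%:~R < c%:~R + (w (sigma s) - w (sigma t)))).
  by rewrite int_lt_addr ?subr_le0 ?le_omega_sigma //; lra.
by apply/idP/idP => ?; lra.
Qed.

Definition Jlevel : int := if 0 <= S then 1 else 0.
Definition Jedge : nat := if 0 <= S then `|S|%N else (L - `|S|)%N.

Lemma Jedge_lt : (Jedge < L)%N.
Proof. by have := Ssum_bound; rewrite /Jedge; case: ifP => S_ge0; lia. Qed.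

Lemma Jlevel_Jedge : Jlevel * L%:Z - (L - Jedge.+1)%:Z = S + 1.
Proof. by have := Ssum_bound; rewrite /Jlevel /Jedge; case: ifP => S_ge0; lia. Qed.

Lemma Jv_sigma t : (t < L)%N -> Jv L alpha (sigma t) = step_down Jedge.+1 Jlevel t.
Proof.
move=> ltt; have := Ssum_bound; rewrite /Jv /Jedge /Jlevel /step_down /=.
case: ifP => S_ge0; rewrite ?count_omega_lt ?count_omega_gt //;
  by repeat case: ifP => ?; lia.
Qed.

Lemma sum_Jv : \sum_(i < L) Jv L alpha i = S + 1.
Proof.
rewrite (sum_sigma sigma_lt sigma_inj) -Jlevel_Jedge -sum_step_down.
by apply: eq_bigr => t _; rewrite Jv_sigma.
Qed.

Definition ksite : nat := `|kplus L alpha|%N.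

Lemma kplus_bounds : 0 <= kplus L alpha < L%:Z.
Proof. by rewrite modz_ge0 ?ltz_pmod //; lia. Qed.

Lemma kplusE : kplus L alpha = ksite%:Z.
Proof. by have := kplus_bounds; rewrite /ksite; lia. Qed.

Lemma ksite_lt : (ksite < L)%N.
Proof. by have := kplus_bounds; rewrite /ksite; lia. Qed.

(* For j = k+, the integer parts of the z^+_i. *)
Definition Jminus (j i : nat) : int := Jv L alpha i - (if i == j then 1 else 0).

Lemma sum_Jminus j : (j < L)%N -> \sum_(i < L) Jminus j i = S.
Proof. by move=> ltj; rewrite /Jminus sumrB sum_Jv (sum_ord_eq (fun=> 1)) // addrK. Qed.

Definition z_nint (m : nat -> int) (i : nat) : int := lap L m i + a i.

Lemma zc_split m i : zc L alpha m i = (z_nint m i)%:~R + w i.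
Proof. by rewrite /zc /z_nint (intrD _ (lap L m i)) -addrA -lap_alpha_split. Qed.

Lemma sum_z_nint m : \sum_(i < L) z_nint m i = S.
Proof. by rewrite big_split /= sum_lap add0r. Qed.

Lemma Jminus_realizable j : (j < L)%N ->
  (exists m, forall i, (i < L)%N -> z_nint m i = Jminus j i) <-> j = ksite.
Proof.
move=> ltj.
have -> : (exists m, forall i, (i < L)%N -> z_nint m i = Jminus j i) <->
    (exists m : nat -> int, forall i, (i < L)%N -> lap L m i = Jminus j i - a i).
  split=> -[m eq_m]; exists m => i lti; first by rewrite -eq_m // addrK.
  by rewrite /z_nint eq_m // subrK.
have weighted : \sum_(i < L) i%:Z * (Jminus j i - a i) =
    \sum_(i < L) i%:Z * (- a i + Jv L alpha i) - j%:Z.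
  rewrite -(sum_ord_eq (fun i => i%:Z) ltj) -sumrB.
  by apply: eq_bigr => i _; rewrite /Jminus; case: eqP => _; ring.
have sum0 : \sum_(i < L) (Jminus j i - a i) = 0.
  by rewrite sumrB sum_Jminus // /Ssum subrr.
rewrite (lap_imageP L_gt0) weighted -eqz_mod_dvd -/(kplus L alpha) kplusE.
rewrite (modz_small (_ : 0 <= j%:Z < L%:Z)); last by lia.
by split=> [[_ /eqP[->]] | <-].
Qed.

Lemma Ssum_le_sum_bound m (b : nat -> int) :
  (forall t, (t < L)%N -> z_nint m (sigma t) <= b t) -> S <= \sum_(t < L) b t.
Proof.
move=> le_b; rewrite -(sum_z_nint m) (sum_sigma sigma_lt sigma_inj).
by apply: ler_sum => t _; apply: le_b.
Qed.

Lemma below_Jminus m j : (j < L)%N ->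
  (forall t, (t < L)%N -> z_nint m (sigma t) <= Jminus j (sigma t)) -> j = ksite.
Proof.
move=> ltj le_J; apply/(Jminus_realizable ltj); exists m => i lti.
have [t ltt <-] := sigma_surj sigma_lt sigma_inj lti.
apply: (@eq_from_le_sum _ _ (fun t => z_nint m (sigma t)) (fun t => Jminus j (sigma t))
  _ _ (Ordinal ltt)) => [u|]; first exact: le_J.
by rewrite -!(sum_sigma sigma_lt sigma_inj) sum_z_nint sum_Jminus.
Qed.

Lemma minmax_z_level s c : (s < L)%N ->
  (forall t, (t < L)%N -> Jminus ksite (sigma t) <= step_down s.+1 c t) ->
  Jminus ksite (sigma s) = c ->
  (forall m, ~ forall t, (t < L)%N -> z_nint m (sigma t) <= step_down s c t) ->
  minmax_z L alpha (w (sigma s) + c%:~R).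
Proof.
move=> lts Jk_le Jk_s no_below.
have [m0 z_m0] := (Jminus_realizable ksite_lt).2 erefl.
split.
- exists m0; apply/le_anti/andP; split.
  + apply: maxL_le => // i lti; have [t ltt <-] := sigma_surj sigma_lt sigma_inj lti.
    by rewrite zc_split z_m0 ?sigma_lt // z_le_level // Jk_le.
  + apply: le_trans (le_maxL _ (sigma_lt lts)).
    by rewrite zc_split z_m0 ?sigma_lt // Jk_s addrC.
- move=> m; rewrite leNgt; apply/negP => lt_max; apply: (no_below m) => t ltt.
  rewrite -(z_lt_level _ _ lts ltt) -zc_split.
  exact: le_lt_trans (le_maxL _ (sigma_lt ltt)) lt_max.
Qed.

Lemma Jminus_sigma j t : (t < L)%N ->
  Jminus j (sigma t) = step_down Jedge.+1 Jlevel t - (if sigma t == j then 1 else 0).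
Proof. by move=> ltt; rewrite /Jminus Jv_sigma. Qed.

Lemma minmax_z_at_edge : ksite <> sigma Jedge ->
  minmax_z L alpha (w (sigma Jedge) + Jlevel%:~R).
Proof.
move=> k_neq; have ltJ := Jedge_lt; apply: minmax_z_level => //.
- move=> t ltt; rewrite Jminus_sigma //; case: ifP => _; lia.
- rewrite Jminus_sigma // /step_down ltnn.
  by case: eqP => [k_eq|]; [case: k_neq | rewrite subr0].
- move=> m le_m; apply/k_neq/esym/(@below_Jminus m _ (sigma_lt ltJ)) => t ltt.
  rewrite Jminus_sigma // (sigma_eq sigma_inj) //; move: (le_m t ltt); rewrite /step_down.
  by repeat case: ifP => ?; lia.
Qed.

Lemma minmax_z_below_edge : ksite = sigma Jedge -> (0 < Jedge)%N ->
  minmax_z L alpha (w (sigma Jedge.-1) + Jlevel%:~R).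
Proof.
move=> k_eq J_gt0; have ltJ := Jedge_lt; have ltJ1 : (Jedge.-1 < L)%N by lia.
apply: minmax_z_level => //.
- move=> t ltt; rewrite Jminus_sigma // k_eq (sigma_eq sigma_inj) // /step_down prednK //.
  by repeat case: ifP => ?; lia.
- rewrite Jminus_sigma // k_eq (sigma_eq sigma_inj) // /step_down.
  by repeat case: ifP => ?; lia.
- move=> m /Ssum_le_sum_bound; rewrite sum_step_down.
  by have := Jlevel_Jedge; lia.
Qed.

Lemma minmax_z_edge0 : ksite = sigma 0 -> Jedge = 0%N ->
  minmax_z L alpha (w (sigma L.-1) + (Jlevel - 1)%:~R).
Proof.
move=> k_eq J0; have ltL1 : (L.-1 < L)%N by lia.
apply: minmax_z_level => //.
- move=> t ltt; rewrite Jminus_sigma // k_eq (sigma_eq sigma_inj) // J0 /step_down prednK //.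
  by repeat case: ifP => ?; lia.
- rewrite Jminus_sigma // k_eq (sigma_eq sigma_inj) // J0 /step_down.
  by repeat case: ifP => ?; lia.
- move=> m /Ssum_le_sum_bound; rewrite sum_step_down.
  by have := Jlevel_Jedge; rewrite J0; lia.
Qed.

Lemma exists_minmax_z : exists T, minmax_z L alpha T.
Proof.
case: (eqVneq ksite (sigma Jedge)) => [k_eq|/eqP k_neq].
  case: (posnP Jedge) => [J0|J_gt0]; eexists.
    by apply: minmax_z_edge0; rewrite // k_eq J0.
  exact: minmax_z_below_edge.
by eexists; apply: minmax_z_at_edge.
Qed.

Lemma minmax_z_cases :
  [/\ 0 <= S -> kplus L alpha <> (sigma `|S|)%:Z ->
        minmax_z L alpha (w (sigma `|S|) + 1),
      0 < S -> kplus L alpha = (sigma `|S|)%:Z ->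
        minmax_z L alpha (w (sigma (`|S| - 1)%N) + 1),
      S = 0 -> kplus L alpha = (sigma 0)%:Z ->
        minmax_z L alpha (w (sigma (L - 1)%N)),
      S < 0 -> kplus L alpha <> (sigma (L - `|S|))%:Z ->
        minmax_z L alpha (w (sigma (L - `|S|)%N)) &
      S < 0 -> kplus L alpha = (sigma (L - `|S|))%:Z ->
        minmax_z L alpha (w (sigma (L - `|S| - 1)%N))].
Proof.
have := Ssum_bound; rewrite kplusE => S_bound.
split=> [S_ge0 k_neq | S_gt0 [k_eq] | S0 [k_eq] | S_lt0 k_neq | S_lt0 [k_eq]].
- have := minmax_z_at_edge; rewrite /Jedge /Jlevel S_ge0 mulr1z; apply=> k_eq.
  by apply: k_neq; rewrite k_eq.
- have := minmax_z_below_edge; rewrite /Jedge /Jlevel ltW // mulr1z subn1.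
  by apply=> //; lia.
- have := minmax_z_edge0; rewrite /Jedge /Jlevel S0 subrr mulr0z addr0 subn1.
  by apply.
- have := minmax_z_at_edge; rewrite /Jedge /Jlevel leNgt S_lt0 /= mulr0z addr0.
  by apply=> k_eq; apply: k_neq; rewrite k_eq.
- have := minmax_z_below_edge; rewrite /Jedge /Jlevel leNgt S_lt0 /= mulr0z addr0 subn1.
  by apply=> //; lia.
Qed.

End ToyModel.

Unset Implicit Arguments.

Theorem corollary1 (R : realType) (L : nat) (lambda : R) (alpha : nat -> R)
  (sigma : nat -> nat) :
  (0 < L)%N ->
  0 < lambda ->
  (forall i, (i < L)%N -> - 2^-1 < alpha i < 2^-1) ->
  (* almost-sure genericity: the ω_i are pairwise distinct and no Δα_i is a
     half-integer *)
  (forall i j, (i < L)%N -> (j < L)%N -> omega L alpha i = omega L alpha j -> i = j) ->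
  (forall i (n : int), (i < L)%N -> lap L alpha i <> n%:~R + 2^-1) ->
  (* sigma is the permutation of {0..L-1} sorting ω increasingly *)
  (forall i, (i < L)%N -> (sigma i < L)%N) ->
  (forall i j, (i < L)%N -> (j < L)%N -> sigma i = sigma j -> i = j) ->
  (forall i j, (i < j < L)%N -> omega L alpha (sigma i) < omega L alpha (sigma j)) ->
  let S := Ssum L alpha in
  let w := omega L alpha in
  let k := kplus L alpha in
  (exists mp : nat -> int, is_threshold_config L alpha mp) /\
  forall mp : nat -> int, is_threshold_config L alpha mp ->
  let zmax := maxL L (zc L alpha mp) in
  ((0 <= S) -> k <> (sigma `|S|%N)%:Z -> zmax = w (sigma `|S|%N) + 1) /\
  ((0 < S) -> k = (sigma `|S|%N)%:Z -> zmax = w (sigma (`|S| - 1)%N) + 1) /\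
  (S = 0 -> k = (sigma 0%N)%:Z -> zmax = w (sigma (L - 1)%N)) /\
  (S < 0 -> k <> (sigma (L - `|S|)%N)%:Z -> zmax = w (sigma (L - `|S|)%N)) /\
  (S < 0 -> k = (sigma (L - `|S|)%N)%:Z -> zmax = w (sigma (L - `|S| - 1)%N)) /\
  Fth L lambda alpha = lambda * (2^-1 - eta_lam lambda * zmax).
Proof.
move=> L_gt0 lambda_gt0 _ _ not_half sigma_lt sigma_inj sigma_sorts; cbv zeta.
have [T minT] := exists_minmax_z L_gt0 not_half sigma_lt sigma_inj sigma_sorts.
have [caseA caseB caseC caseD caseE] :=
  minmax_z_cases L_gt0 not_half sigma_lt sigma_inj sigma_sorts.
split; first exact: minmax_z_threshold minT.
move=> mp thr_mp; have zmaxE T' := threshold_maxL (T := T') thr_mp.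
split; first by move=> ? ?; apply/zmaxE/caseA.
split; first by move=> ? ?; apply/zmaxE/caseB.
split; first by move=> ? ?; apply/zmaxE/caseC.
split; first by move=> ? ?; apply/zmaxE/caseD.
split; first by move=> ? ?; apply/zmaxE/caseE.
exact: Fth_threshold.
Qed.
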